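(* Let $(X,d)$ be a totally bounded metric space with II-modulus of total boundedness $\gamma$, $\emptyset\ne F\subseteq X$ with a representation $(\tilde F_k)$, and let $G,H:\mathbb{R}_+\to\mathbb{R}_+$ have a $G$-modulus $\alpha_G$ and an $H$-modulus $\beta_H$. Let $(x_n)$ in $X$ be uniformly $(G,H)$-Fej\'er monotone w.r.t. $F$ with modulus $\chi$ and have approximate $F$-points with approximate $F$-point bound $\Phi$. Suppose $F$ is uniformly closed with moduli $\delta_F,\omega_F$. Then for all $k\in\mathbb{N}$ and $g:\mathbb{N}\to\mathbb{N}$ there exists $N\le\tilde\Psi$ such that for all $i,j\in[N,N+g(N)]$: $d(x_i,x_j)\le\frac1{k+1}$ and $x_i\in AF_k$. Here $k_0:=\max\{k,\lceil(\omega_F(k)-1)/2\rceil\}$, $\chi_{k,\delta_F}(n,m,r):=\max\{\delta_F(k),\chi(n,m,r)\}$, $c(n,r):=\max\{\chi_{k,\delta_F}(i,g(i),r)\mid i\le n\}$, $\Psi_0(0):=0$, $\Psi_0(n+1):=\Phi\big(c(\Psi_0(n),2\beta_H(2k_0+1)+1)\big)$, and $\tilde\Psi:=\Psi_0\big(\gamma(\alpha_G(2\beta_H(2k_0+1)+1))\big)$.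
   Context: II-modulus of total boundedness $\gamma$: for every $k$ and every sequence $(y_n)$ in $X$ there are $0\le i<j\le\gamma(k)$ with $d(y_i,y_j)\le\frac1{k+1}$. Representation: $F=\bigcap_k\tilde F_k$, $AF_k:=\bigcap_{l\le k}\tilde F_l$. $G$-modulus $\alpha_G$: $a\le\frac1{\alpha_G(k)+1}\Rightarrow G(a)\le\frac1{k+1}$ for all $k\in\mathbb{N}$, $a\in\mathbb{R}_+$. $H$-modulus $\beta_H$: $H(a)\le\frac1{\beta_H(k)+1}\Rightarrow a\le\frac1{k+1}$. Uniformly $(G,H)$-Fej\'er monotone with modulus $\chi:\mathbb{N}^3\to\mathbb{N}$: for all $r,n,m$, all $p\in AF_{\chi(n,m,r)}$ and all $l\le m$, $H(d(x_{n+l},p))<G(d(x_n,p))+\frac1{r+1}$. Approximate $F$-point bound: a nondecreasing $\Phi:\mathbb{N}\to\mathbb{N}$ with: for all $k$ there is $N\le\Phi(k)$ with $x_N\in AF_k$. $F$ is uniformly closed with moduli $\delta_F,\omega_F:\mathbb{N}\to\mathbb{N}$ if for all $k\in\mathbb{N}$ and $p,q\in X$: $q\in AF_{\delta_F(k)}$ and $d(p,q)\le\frac1{\omega_F(k)+1}$ imply $p\in AF_k$. *)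

From Stdlib Require Import Reals Lra Lia Arith.
Open Scope R_scope.

Definition is_metric {X : Type} (d : X -> X -> R) : Prop :=
  (forall x y, 0 <= d x y) /\
  (forall x y, d x y = 0 <-> x = y) /\
  (forall x y, d x y = d y x) /\
  (forall x y z, d x z <= d x y + d y z).

Definition II_modulus_tb {X : Type} (d : X -> X -> R) (gamma : nat -> nat) : Prop :=
  forall (k : nat) (y : nat -> X),
    exists i j : nat, (i < j)%nat /\ (j <= gamma k)%nat /\
      d (y i) (y j) <= 1 / (INR k + 1).

Definition Fset {X : Type} (Ftil : nat -> X -> Prop) (p : X) : Prop :=
  forall k, Ftil k p.
Definition AF {X : Type} (Ftil : nat -> X -> Prop) (k : nat) (p : X) : Prop :=
  forall l, (l <= k)%nat -> Ftil l p.

(* Functions R_+ -> R_+ (represented as R -> R mapping R_+ into R_+). *)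
Definition maps_nonneg (G : R -> R) : Prop := forall a, 0 <= a -> 0 <= G a.

Definition G_modulus (G : R -> R) (alphaG : nat -> nat) : Prop :=
  forall (k : nat) (a : R), 0 <= a ->
    a <= 1 / (INR (alphaG k) + 1) -> G a <= 1 / (INR k + 1).

Definition H_modulus (H : R -> R) (betaH : nat -> nat) : Prop :=
  forall (k : nat) (a : R), 0 <= a ->
    H a <= 1 / (INR (betaH k) + 1) -> a <= 1 / (INR k + 1).

Definition unif_GH_Fejer {X : Type} (d : X -> X -> R) (Ftil : nat -> X -> Prop)
  (G H : R -> R) (x : nat -> X) (chi : nat -> nat -> nat -> nat) : Prop :=
  forall (r n m : nat) (p : X), AF Ftil (chi n m r) p ->
    forall l, (l <= m)%nat ->
      H (d (x (n + l)%nat) p) < G (d (x n) p) + 1 / (INR r + 1).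

Definition approx_F_point_bound {X : Type} (Ftil : nat -> X -> Prop)
  (x : nat -> X) (Phi : nat -> nat) : Prop :=
  (forall a b, (a <= b)%nat -> (Phi a <= Phi b)%nat) /\
  (forall k, exists N, (N <= Phi k)%nat /\ AF Ftil k (x N)).

Definition unif_closed {X : Type} (d : X -> X -> R) (Ftil : nat -> X -> Prop)
  (deltaF omegaF : nat -> nat) : Prop :=
  forall (k : nat) (p q : X), AF Ftil (deltaF k) q ->
    d p q <= 1 / (INR (omegaF k) + 1) -> AF Ftil k p.

(* k0 := max{k, ceil((omegaF k - 1)/2)}; for a natural number w,
   ceil((w - 1)/2) = w / 2 (floor division), including w = 0 where ceil(-1/2) = 0. *)
Definition k0 (omegaF : nat -> nat) (k : nat) : nat :=
  Nat.max k (Nat.div (omegaF k) 2).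

Definition chi_kd (chi : nat -> nat -> nat -> nat) (deltaF : nat -> nat) (k : nat)
  (n m r : nat) : nat := Nat.max (deltaF k) (chi n m r).

Fixpoint max_upto (f : nat -> nat) (n : nat) : nat :=
  match n with
  | O => f O
  | S n' => Nat.max (max_upto f n') (f n)
  end.

Definition c_fun (chi : nat -> nat -> nat -> nat) (deltaF : nat -> nat) (k : nat)
  (g : nat -> nat) (n r : nat) : nat :=
  max_upto (fun i => chi_kd chi deltaF k i (g i) r) n.

Fixpoint Psi0 (Phi : nat -> nat) (chi : nat -> nat -> nat -> nat) (deltaF omegaF : nat -> nat)
  (betaH : nat -> nat) (k : nat) (g : nat -> nat) (n : nat) : nat :=
  match n with
  | O => O
  | S n' => Phi (c_fun chi deltaF k g (Psi0 Phi chi deltaF omegaF betaH k g n')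
                   (2 * betaH (2 * k0 omegaF k + 1) + 1)%nat)
  end.

Definition Psi_tilde (Phi : nat -> nat) (chi : nat -> nat -> nat -> nat)
  (deltaF omegaF : nat -> nat) (alphaG betaH gamma : nat -> nat) (k : nat) (g : nat -> nat) : nat :=
  Psi0 Phi chi deltaF omegaF betaH k g
    (gamma (alphaG (2 * betaH (2 * k0 omegaF k + 1) + 1)%nat)).

From Stdlib Require Import Reals Lra Lia Arith ClassicalEpsilon.
Open Scope R_scope.

(* Pick points [y n := x (N n)] of the sequence lying in [AF_(c(Psi0 n, r))] with
   [N n <= Psi0 (n+1)]; total boundedness yields [i < j <= gamma(alphaG r)] with
   [y i] and [y j] close, so [G(d(y i, y j))] is small.  Since [N i <= Psi0 j], the point
   [p := y j] lies deep enough in [F] for the Fejér inequality at [N := N i] over the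
   whole window [N, N + g N]; the [H]-modulus turns this into [d(x_l, p) <= 1/(2 k0 + 2)]
   on the window.  The triangle inequality gives metastability, and uniform closedness
   of [F] (note [omegaF k <= 2 k0 + 1] and [p] in [AF_(deltaF k)]) gives [x_l] in [AF_k]. *)

Lemma unit_frac_antitone (m n : nat) :
  (m <= n)%nat -> 1 / (INR n + 1) <= 1 / (INR m + 1).
Proof.
  intro Hmn. apply le_INR in Hmn. pose proof (pos_INR m).
  apply Rmult_le_compat_l; [lra|]. apply Rinv_le_contravar; lra.
Qed.

Lemma unit_frac_double (m : nat) :
  1 / (INR (2 * m + 1) + 1) + 1 / (INR (2 * m + 1) + 1) = 1 / (INR m + 1).
Proof. rewrite plus_INR, mult_INR. simpl. pose proof (pos_INR m). field. lra. Qed.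

Lemma le_k0 (omegaF : nat -> nat) (k : nat) : (k <= k0 omegaF k)%nat.
Proof. unfold k0. lia. Qed.

Lemma omega_le_double_k0 (omegaF : nat -> nat) (k : nat) :
  (omegaF k <= 2 * k0 omegaF k + 1)%nat.
Proof.
  unfold k0.
  pose proof (Nat.div_mod (omegaF k) 2 ltac:(lia)).
  pose proof (Nat.mod_upper_bound (omegaF k) 2 ltac:(lia)).
  lia.
Qed.

Lemma AF_weaken {X : Type} (Ftil : nat -> X -> Prop) (m n : nat) (p : X) :
  (m <= n)%nat -> AF Ftil n p -> AF Ftil m p.
Proof. intros Hmn HA l Hl. apply HA. lia. Qed.

Lemma max_upto_ge (f : nat -> nat) (n i : nat) :
  (i <= n)%nat -> (f i <= max_upto f n)%nat.
Proof.
  induction n as [|n IH]; intros Hi; simpl.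
  - replace i with 0%nat by lia. lia.
  - destruct (Nat.eq_dec i (S n)) as [->|Hne]; [lia|].
    specialize (IH ltac:(lia)). lia.
Qed.

Lemma max_upto_mono (f : nat -> nat) (n m : nat) :
  (n <= m)%nat -> (max_upto f n <= max_upto f m)%nat.
Proof. induction 1; simpl; lia. Qed.

Lemma AF_c_fun {X : Type} (Ftil : nat -> X -> Prop) (chi : nat -> nat -> nat -> nat)
  (deltaF : nat -> nat) (k : nat) (g : nat -> nat) (n a r : nat) (p : X) :
  (n <= a)%nat -> AF Ftil (c_fun chi deltaF k g a r) p ->
  AF Ftil (deltaF k) p /\ AF Ftil (chi n (g n) r) p.
Proof.
  intros Hna Hp.
  pose proof (max_upto_ge (fun i => chi_kd chi deltaF k i (g i) r) a n Hna) as Hc.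
  unfold c_fun, chi_kd in *.
  split; eapply AF_weaken; try exact Hp; lia.
Qed.

Lemma Psi0_mono (Phi : nat -> nat) (chi : nat -> nat -> nat -> nat)
  (deltaF omegaF betaH : nat -> nat) (k : nat) (g : nat -> nat) (n m : nat) :
  (forall a b, (a <= b)%nat -> (Phi a <= Phi b)%nat) -> (n <= m)%nat ->
  (Psi0 Phi chi deltaF omegaF betaH k g n <= Psi0 Phi chi deltaF omegaF betaH k g m)%nat.
Proof.
  intros HPhi.
  assert (Hstep : forall l, (Psi0 Phi chi deltaF omegaF betaH k g l
                              <= Psi0 Phi chi deltaF omegaF betaH k g (S l))%nat).
  { induction l as [|l IH]; [simpl; lia|].
    simpl. apply HPhi. unfold c_fun. apply max_upto_mono. exact IH. }
  induction 1; [lia|]. specialize (Hstep m). lia.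
Qed.

Section Fejer_window.

Variables (X : Type) (d : X -> X -> R) (Ftil : nat -> X -> Prop) (G H : R -> R)
  (x : nat -> X) (chi : nat -> nat -> nat -> nat).

Hypothesis d_metric : is_metric d.

Lemma dist_le_double_of_center (y z p : X) (e : R) :
  d y p <= e -> d z p <= e -> d y z <= e + e.
Proof.
  destruct d_metric as [_ [_ [Hsym Htri]]].
  intros Hy Hz. pose proof (Htri y p z). rewrite (Hsym p z) in *. lra.
Qed.

Lemma Fejer_window_close (betaH : nat -> nat) (K N m : nat) (p : X) :
  H_modulus H betaH -> unif_GH_Fejer d Ftil G H x chi ->
  AF Ftil (chi N m (2 * betaH K + 1)%nat) p ->
  G (d (x N) p) <= 1 / (INR (2 * betaH K + 1) + 1) ->
  forall i, (N <= i <= N + m)%nat -> d (x i) p <= 1 / (INR K + 1).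
Proof.
  intros HHm HFe Hp HG i Hi.
  destruct d_metric as [Hd0 _].
  apply HHm; [apply Hd0|].
  rewrite <- unit_frac_double.
  replace i with (N + (i - N))%nat by lia.
  pose proof (HFe _ N m p Hp (i - N)%nat ltac:(lia)). lra.
Qed.

Lemma window_metastable (deltaF omegaF : nat -> nat) (k N m : nat) (p : X) :
  unif_closed d Ftil deltaF omegaF -> AF Ftil (deltaF k) p ->
  (forall i, (N <= i <= N + m)%nat -> d (x i) p <= 1 / (INR (2 * k0 omegaF k + 1) + 1)) ->
  forall i j, (N <= i <= N + m)%nat -> (N <= j <= N + m)%nat ->
    d (x i) (x j) <= 1 / (INR k + 1) /\ AF Ftil k (x i).
Proof.
  intros Hcl Hp Hclose i j Hi Hj. split.
  - eapply Rle_trans.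
    + apply (dist_le_double_of_center _ _ p); [apply Hclose, Hi | apply Hclose, Hj].
    + rewrite unit_frac_double. apply unit_frac_antitone, le_k0.
  - apply (Hcl k (x i) p Hp). eapply Rle_trans; [apply Hclose, Hi|].
    apply unit_frac_antitone, omega_le_double_k0.
Qed.

End Fejer_window.

Theorem theorem5p3 (X : Type) (d : X -> X -> R) (gamma : nat -> nat)
  (Ftil : nat -> X -> Prop) (G H : R -> R) (alphaG betaH : nat -> nat)
  (x : nat -> X) (chi : nat -> nat -> nat -> nat) (Phi : nat -> nat)
  (deltaF omegaF : nat -> nat) :
  is_metric d ->
  II_modulus_tb d gamma ->
  (exists p, Fset Ftil p) ->
  maps_nonneg G -> maps_nonneg H ->
  G_modulus G alphaG -> H_modulus H betaH ->
  unif_GH_Fejer d Ftil G H x chi ->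
  approx_F_point_bound Ftil x Phi ->
  unif_closed d Ftil deltaF omegaF ->
  forall (k : nat) (g : nat -> nat),
    exists N : nat, (N <= Psi_tilde Phi chi deltaF omegaF alphaG betaH gamma k g)%nat /\
      forall i j : nat, (N <= i <= N + g N)%nat -> (N <= j <= N + g N)%nat ->
        d (x i) (x j) <= 1 / (INR k + 1) /\ AF Ftil k (x i).
Proof.
  intros Hd Htb _ _ _ HGm HHm HFe [HPhi HPts] Hcl k g.
  set (r := (2 * betaH (2 * k0 omegaF k + 1) + 1)%nat).
  set (psi := Psi0 Phi chi deltaF omegaF betaH k g).
  destruct (choice _ HPts) as [pt Hpt].
  set (y := fun n => pt (c_fun chi deltaF k g (psi n) r)).
  assert (Hy : forall n, (y n <= psi (S n))%nat) by (intro n; apply Hpt).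
  destruct (Htb (alphaG r) (fun n => x (y n))) as [i0 [j0 [Hij [Hj0 Hclose]]]].
  exists (y i0). split.
  { pose proof (Psi0_mono Phi chi deltaF omegaF betaH k g (S i0) (gamma (alphaG r)) HPhi
                            ltac:(lia)) as Hmono.
    fold psi in Hmono.
    specialize (Hy i0). unfold Psi_tilde. fold r psi. lia. }
  assert (HyN : (y i0 <= psi j0)%nat).
  { pose proof (Psi0_mono Phi chi deltaF omegaF betaH k g (S i0) j0 HPhi Hij) as Hmono.
    fold psi in Hmono.
    specialize (Hy i0). lia. }
  destruct (AF_c_fun Ftil chi deltaF k g _ _ r _ HyN (proj2 (Hpt _))) as [Hpd Hpchi].
  apply (window_metastable X d Ftil x Hd deltaF omegaF k _ _ _ Hcl Hpd).
  apply (Fejer_window_close X d Ftil G H x chi Hd betaH _ _ _ _ HHm HFe Hpchi).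
  apply HGm; [apply Hd | exact Hclose].
Qed.
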